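(* Let $a>0$ and, for $x_i\in\mathbb{R}$, let $P_+^a(x_i)$ (resp. $P_-^a(x_i)$) be the smallest $x>x_i$ at which the solution of $y'=-ay-\sin(3\pi x/2)$ (resp. $y'=-ay-\sin(\pi x/2)$) with $y(x_i)=0$ vanishes. Then $$P_+^a(4n-2)\in\left(4n-\tfrac43,\,4n-\tfrac23\right)\quad\forall n\in\mathbb{N}\setminus\{0\},\qquad P_-^a(4n)\in(4n+2,\,4n+4)\quad\forall n\in\mathbb{N}.$$ *)

From Stdlib Require Import Reals Lra.
From Coquelicot Require Import Coquelicot.
Open Scope R_scope.

Definition ivp_solution (a omega x0 : R) (y : R -> R) : Prop :=
  y x0 = 0 /\ forall x : R, is_derive y x (- a * y x - sin (omega * x)).

Definition first_zero_after (y : R -> R) (x0 p : R) : Prop :=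
  x0 < p /\ y p = 0 /\ forall t : R, x0 < t < p -> y t <> 0.

(* With the integrating factor exp (a x), the solution of
   y' = -a y - sin (k (x - x0)), y x0 = 0 becomes z := exp (a x) y, with
   z' = - exp (a x) sin (k (x - x0)).  On the first half-period z decreases from
   0, on the second it increases; comparing the two lobes point by point, the
   second one carries the larger weight exp (a x), so z ends the period positive
   and crosses 0 exactly once in the second half.  When sin (k x0) = 0 the
   forcing sin (k x) equals +/- sin (k (x - x0)), which reduces the theorem to
   this picture with k = 3 PI / 2 and k = PI / 2. *)
From Stdlib Require Import Reals Lra.
From Coquelicot Require Import Coquelicot.
Open Scope R_scope.

Lemma MVT_is_derive (f df : R -> R) (u v : R) :
  u < v -> (forall x, is_derive f x (df x)) ->
  exists c, u < c < v /\ f v - f u = df c * (v - u).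
Proof.
intros huv hf.
destruct (MVT_cor2 f df u v huv) as [c [Hc Hcuv]].
- intros c _. apply is_derive_Reals, hf.
- exists c. split; assumption.
Qed.

Lemma is_derive_shift (f : R -> R) (s x l : R) :
  is_derive f (s + x) l -> is_derive (fun t => f (s + t)) x l.
Proof.
intro hf.
assert (E : scal 1 l = l) by (unfold scal; simpl; unfold mult; simpl; ring).
rewrite <- E.
apply (is_derive_comp f (fun t => s + t)); [exact hf|].
auto_derive; [exact I | ring].
Qed.

Lemma sin_pos_first_half_period (k t : R) :
  0 < k -> 0 < t < PI / k -> 0 < sin (k * t).
Proof.
intros hk ht. apply sin_gt_0; [nra|].
replace PI with (k * (PI / k)) by (field; lra).
apply Rmult_lt_compat_l; lra.
Qed.

Lemma sin_neg_second_half_period (k t : R) :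
  0 < k -> PI / k < t < 2 * (PI / k) -> sin (k * t) < 0.
Proof.
intros hk ht.
apply sin_lt_0.
- replace PI with (k * (PI / k)) by (field; lra).
  apply Rmult_lt_compat_l; lra.
- replace (2 * PI) with (k * (2 * (PI / k))) by (field; lra).
  apply Rmult_lt_compat_l; lra.
Qed.

Lemma PI_div_pos (k : R) : 0 < k -> 0 < PI / k.
Proof. intro hk. apply Rdiv_lt_0_compat; [apply PI_RGT_0 | exact hk]. Qed.

Section IntegratingFactor.

Variables (a k x0 : R) (z : R -> R).
Hypotheses (ha : 0 < a) (hk : 0 < k).
Hypothesis z_x0 : z x0 = 0.
Hypothesis z_derive :
  forall x, is_derive z x (- exp (a * x) * sin (k * (x - x0))).

Let h := PI / k.

Lemma z_neg_first_half_period (t : R) : x0 < t <= x0 + h -> z t < 0.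
Proof.
intro ht.
destruct (MVT_is_derive z _ x0 t ltac:(lra) z_derive) as [c [hc Hz]].
assert (0 < sin (k * (c - x0))) by (apply sin_pos_first_half_period; unfold h in *; lra).
assert (0 < exp (a * c) * sin (k * (c - x0)) * (t - x0)).
{ apply Rmult_lt_0_compat; [apply Rmult_lt_0_compat; [apply exp_pos|]|]; lra. }
rewrite z_x0 in Hz. nra.
Qed.

Lemma z_increasing_second_half_period (u v : R) :
  x0 + h <= u < v -> v <= x0 + 2 * h -> z u < z v.
Proof.
intros hu hv.
destruct (MVT_is_derive z _ u v ltac:(lra) z_derive) as [c [hc Hz]].
assert (sin (k * (c - x0)) < 0) by (apply sin_neg_second_half_period; unfold h in *; lra).
assert (0 < exp (a * c) * - sin (k * (c - x0)) * (v - u)).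
{ apply Rmult_lt_0_compat; [apply Rmult_lt_0_compat; [apply exp_pos|]|]; lra. }
nra.
Qed.

(* z (x0 + 2h) = D h - D 0 for D t := z (x0 + h + t) + z (x0 + t), and
   D' t = (exp (a (x0 + h + t)) - exp (a (x0 + t))) sin (k t) > 0 since
   sin (k (t + h)) = - sin (k t). *)
Lemma z_pos_end_period : 0 < z (x0 + 2 * h).
Proof.
assert (hh : 0 < h) by (apply PI_div_pos, hk).
set (D := fun t => z (x0 + h + t) + z (x0 + t)).
set (dD := fun t => (exp (a * (x0 + h + t)) - exp (a * (x0 + t))) * sin (k * t)).
assert (D_derive : forall t : R, is_derive D t (dD t)).
{ intro t.
  assert (E : - exp (a * (x0 + h + t)) * sin (k * (x0 + h + t - x0))
              + - exp (a * (x0 + t)) * sin (k * (x0 + t - x0)) = dD t).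
  { unfold dD.
    replace (k * (x0 + h + t - x0)) with (k * t + PI) by (unfold h; field; lra).
    replace (x0 + t - x0) with t by ring.
    rewrite neg_sin. ring. }
  rewrite <- E.
  apply (is_derive_plus (fun t => z (x0 + h + t)) (fun t => z (x0 + t)));
    apply is_derive_shift, z_derive. }
destruct (MVT_is_derive D dD 0 h hh D_derive) as [c [hc HD]].
assert (0 < sin (k * c)) by (apply sin_pos_first_half_period; unfold h in *; lra).
assert (exp (a * (x0 + c)) < exp (a * (x0 + h + c))) by (apply exp_increasing; nra).
assert (0 < dD c * (h - 0)).
{ unfold dD. apply Rmult_lt_0_compat; [apply Rmult_lt_0_compat|]; lra. }
unfold D in HD. rewrite !Rplus_0_r, z_x0 in HD.
replace (x0 + h + h) with (x0 + 2 * h) in HD by ring.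
lra.
Qed.

Lemma z_first_zero :
  exists p, x0 + h < p < x0 + 2 * h /\ z p = 0 /\
            forall t, x0 < t < p -> z t <> 0.
Proof.
assert (z_cont : continuity z).
{ intro x. apply derivable_continuous_pt. eexists. apply is_derive_Reals, z_derive. }
assert (hh : 0 < h) by (apply PI_div_pos, hk).
assert (z_h : z (x0 + h) < 0) by (apply z_neg_first_half_period; lra).
pose proof z_pos_end_period as z_2h.
destruct (IVT z (x0 + h) (x0 + 2 * h) z_cont ltac:(lra) z_h z_2h) as [p [hp zp]].
exists p. split; [|split; [exact zp|]].
- split; apply Rnot_le_lt; intro hle.
  + assert (p = x0 + h) by lra. subst p. lra.
  + assert (p = x0 + 2 * h) by lra. subst p. lra.
- intros t ht zt.
  destruct (Rle_dec t (x0 + h)).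
  + assert (z t < 0) by (apply z_neg_first_half_period; lra). lra.
  + assert (z t < z p) by (apply z_increasing_second_half_period; lra). lra.
Qed.

End IntegratingFactor.

Lemma shifted_forcing_first_zero (a k x0 : R) (y : R -> R) :
  0 < a -> 0 < k -> y x0 = 0 ->
  (forall x, is_derive y x (- a * y x - sin (k * (x - x0)))) ->
  exists p, first_zero_after y x0 p /\ x0 + PI / k < p < x0 + 2 * (PI / k).
Proof.
intros ha hk y_x0 y_derive.
set (z := fun x => exp (a * x) * y x).
assert (z_derive : forall x, is_derive z x (- exp (a * x) * sin (k * (x - x0)))).
{ intro x. unfold z.
  replace (- exp (a * x) * sin (k * (x - x0)))
    with (plus (mult (a * exp (a * x)) (y x))
               (mult (exp (a * x)) (- a * y x - sin (k * (x - x0)))))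
    by (unfold plus, mult; simpl; ring).
  apply (is_derive_mult (fun x => exp (a * x)) y);
    [| apply y_derive | intros; apply Rmult_comm].
  auto_derive; [exact I | ring]. }
assert (z_zero : forall t, z t = 0 <-> y t = 0).
{ intro t. unfold z. pose proof (exp_pos (a * t)). split; intro E.
  - destruct (Rmult_integral _ _ E); lra.
  - rewrite E. ring. }
destruct (z_first_zero a k x0 z ha hk ltac:(apply z_zero; exact y_x0) z_derive)
  as [p [hp [zp z_ne]]].
exists p. split; [|exact hp].
split; [|split].
- pose proof (PI_div_pos k hk). lra.
- apply z_zero, zp.
- intros t ht yt. apply (z_ne t ht), z_zero, yt.
Qed.

Lemma sin_shift_of_sin_zero (k x0 x : R) :
  sin (k * x0) = 0 -> sin (k * x) = cos (k * x0) * sin (k * (x - x0)).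
Proof.
intro s0.
replace (k * x) with (k * (x - x0) + k * x0) by ring.
rewrite sin_plus, s0. ring.
Qed.

Lemma cos_of_sin_zero (x : R) : sin x = 0 -> cos x = 1 \/ cos x = -1.
Proof.
intro s0.
pose proof (sin2_cos2 x) as E. rewrite s0 in E. unfold Rsqr in E.
assert (F : (cos x - 1) * (cos x + 1) = 0) by lra.
destruct (Rmult_integral _ _ F); [left | right]; lra.
Qed.

Lemma first_zero_after_opp (y : R -> R) (x0 p : R) :
  first_zero_after (fun x => - y x) x0 p -> first_zero_after y x0 p.
Proof.
intros [hp [yp y_ne]].
split; [exact hp | split; [lra|]].
intros t ht yt. apply (y_ne t ht). rewrite yt. ring.
Qed.

Lemma ivp_solution_first_zero (a k x0 : R) (y : R -> R) :
  0 < a -> 0 < k -> sin (k * x0) = 0 -> ivp_solution a k x0 y ->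
  exists p, first_zero_after y x0 p /\ x0 + PI / k < p < x0 + 2 * (PI / k).
Proof.
intros ha hk s0 [y_x0 y_derive].
pose proof (fun x => sin_shift_of_sin_zero k x0 x s0) as shift.
destruct (cos_of_sin_zero _ s0) as [c0 | c0]; rewrite c0 in shift.
- apply (shifted_forcing_first_zero a); [exact ha | exact hk | exact y_x0 |].
  intro x. rewrite <- (Rmult_1_l (sin (k * (x - x0)))), <- shift. apply y_derive.
- destruct (shifted_forcing_first_zero a k x0 (fun x => - y x) ha hk)
    as [p [hp hb]].
  + rewrite y_x0. ring.
  + intro x.
    replace (- a * - y x - sin (k * (x - x0)))
      with (opp (- a * y x - sin (k * x)))
      by (rewrite shift; unfold opp; simpl; ring).
    apply (is_derive_opp y), y_derive.
  + exists p. split; [apply first_zero_after_opp, hp | exact hb].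
Qed.

Theorem lemma7 (a : R) (ha : 0 < a) :
  (forall (n : nat), (1 <= n)%nat ->
     forall y : R -> R, ivp_solution a (3 * PI / 2) (4 * INR n - 2) y ->
     exists p : R, first_zero_after y (4 * INR n - 2) p /\
                   4 * INR n - 4 / 3 < p < 4 * INR n - 2 / 3) /\
  (forall (n : nat),
     forall y : R -> R, ivp_solution a (PI / 2) (4 * INR n) y ->
     exists p : R, first_zero_after y (4 * INR n) p /\
                   4 * INR n + 2 < p < 4 * INR n + 4).
Proof.
pose proof PI_RGT_0 as hpi.
split.
- intros n _ y hy.
  destruct (ivp_solution_first_zero a (3 * PI / 2) (4 * INR n - 2) y ha) as [p [hp hb]].
  + lra.
  + apply sin_eq_0_1. exists (6 * Z.of_nat n - 3)%Z.
    rewrite minus_IZR, mult_IZR, <- INR_IZR_INZ. field.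
  + exact hy.
  + exists p. split; [exact hp|].
    replace (PI / (3 * PI / 2)) with (2 / 3) in hb by (field; lra). lra.
- intros n y hy.
  destruct (ivp_solution_first_zero a (PI / 2) (4 * INR n) y ha) as [p [hp hb]].
  + lra.
  + apply sin_eq_0_1. exists (2 * Z.of_nat n)%Z.
    rewrite mult_IZR, <- INR_IZR_INZ. field.
  + exact hy.
  + exists p. split; [exact hp|].
    replace (PI / (PI / 2)) with 2 in hb by (field; lra). lra.
Qed.
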